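(* Let $f:[0,1]\to\mathbb{R}$ with $f(0),f(1)\in\mathbb{Z}$, let $n\in\mathbb{N}_+$, $n\ge 2$, and let $\Phi_n:[0,1]\to\mathbb{R}$ satisfy \[ \Phi_n\left(\tfrac{2}{n}\right)-2\Phi_n\left(\tfrac{1}{n}\right)+\Phi_n(0)\ge\binom{n}{2}^{-1}, \] \[ \Phi_n\left(\tfrac{k+2}{n}\right)-2\Phi_n\left(\tfrac{k+1}{n}\right)+\Phi_n\left(\tfrac{k}{n}\right)\ge\binom{n}{k}^{-1}+\binom{n}{k+2}^{-1},\quad k=1,\dots,n-3 \ (\text{when } n\ge 4), \] \[ \Phi_n(1)-2\Phi_n\left(\tfrac{n-1}{n}\right)+\Phi_n\left(\tfrac{n-2}{n}\right)\ge\binom{n}{n-2}^{-1}. \] If $f(x)-\Phi_n(x)$ is convex on $[0,1]$, then $\widetilde{B}_n(f)$ is convex on $[0,1]$.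
   Context: For $n\in\mathbb{N}_+$ and $f:[0,1]\to\mathbb{R}$, $\widetilde{B}_n(f)(x):=\sum_{k=0}^n \left[f\left(\frac{k}{n}\right)\binom{n}{k}\right]x^k(1-x)^{n-k}$, where $[\alpha]$ is the largest integer $\le\alpha$. *)

From HB Require Import structures.
From mathcomp Require Import all_boot all_order all_algebra.
From mathcomp Require Import reals.
Set Implicit Arguments. Unset Strict Implicit. Unset Printing Implicit Defensive.
Import Order.TTheory GRing.Theory Num.Theory.
Local Open Scope ring_scope.

(* Modified Bernstein operator:
   Bt_n(f)(x) = sum_{k=0}^n [f(k/n) * C(n,k)] x^k (1-x)^(n-k),
   [a] = largest integer <= a (Num.floor). *)
Definition Btilde (R : realType) (n : nat) (f : R -> R) (x : R) : R :=
  \sum_(k < n.+1)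
    (Num.floor (f (k%:R / n%:R) * ('C(n, k))%:R))%:~R
      * x ^+ k * (1 - x) ^+ (n - k).

Definition convex_on01 (R : realType) (g : R -> R) : Prop :=
  forall x y t : R, 0 <= x <= 1 -> 0 <= y <= 1 -> 0 <= t <= 1 ->
    g (t * x + (1 - t) * y) <= t * g x + (1 - t) * g y.

(* In the Bernstein basis, Btilde n f = sum_k c_k b_{n,k} with
   c_k = [f(k/n) C(n,k)] / C(n,k), and its second derivative is
   n(n-1) sum_k (Delta^2 c)_k b_{n-2,k}; as b_{n-2,k} >= 0 on [0,1], it suffices
   that Delta^2 c >= 0.  Flooring puts c_k below f(k/n) by less than
   e_k = 1/C(n,k), and not at all for k = 0, n where f is integer-valued, so
   (Delta^2 c)_k >= Delta^2 (f - Phi)(k/n) + (Delta^2 Phi(k/n) - e_k - e_{k+2}).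
   The first term is nonnegative by convexity of f - Phi (midpoint inequality on
   the grid), the second is exactly the hypothesis on Phi. *)

From HB Require Import structures.
From mathcomp Require Import all_boot all_order all_algebra.
From mathcomp Require Import ring lra zify.
From mathcomp Require Import boolp reals interval_inference.
From mathcomp Require Import topology normedtype derive realfun convex.
Set Implicit Arguments.
Unset Strict Implicit.
Unset Printing Implicit Defensive.

Import Order.TTheory GRing.Theory Num.Theory numFieldNormedType.Exports.
Local Open Scope ring_scope.

Definition fdiff (R : zmodType) (c : nat -> R) (k : nat) : R := c k.+1 - c k.

Lemma binr_gt0 (R : numDomainType) n k : (k <= n)%N -> 0 < 'C(n, k)%:R :> R.
Proof. by move=> kn; rewrite ltr0n bin_gt0. Qed.

Section Bernstein.
Variable R : comNzRingType.
Implicit Types (m k : nat) (c : nat -> R).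

Definition bernstein m k : {poly R} := 'C(m, k)%:R *: ('X^k * (1 - 'X) ^+ (m - k)).

Lemma bernstein_small m k : (m < k)%N -> bernstein m k = 0.
Proof. by move=> mk; rewrite /bernstein bin_small // scale0r. Qed.

Lemma deriv_bernstein0 m : (bernstein m.+1 0)^`() = - (m.+1%:R *: bernstein m 0).
Proof.
rewrite /bernstein !bin0 !scale1r !mul1r !subn0 deriv_exp derivB derivC derivX sub0r.
by rewrite scaler_nat; ring.
Qed.

Lemma deriv_bernsteinS m k :
  (bernstein m.+1 k.+1)^`() = m.+1%:R *: (bernstein m k - bernstein m k.+1).
Proof.
rewrite /bernstein derivZ derivM derivXn deriv_exp derivB derivC derivX sub0r subSS subnS.
have binSl : (m.+1 * 'C(m, k) = k.+1 * 'C(m.+1, k.+1))%N by rewrite -mul_bin_diag.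
have binSr : (m.+1 * 'C(m, k.+1) = (m - k) * 'C(m.+1, k.+1))%N.
  by rewrite -(mul_bin_down m.+1 k.+1).
set j := (m - k)%N in binSr *.
rewrite -!mul_polyC !rmorph_nat.
transitivity ((('X^k * (1 - 'X) ^+ j) *+ (m.+1 * 'C(m, k))
               - ('X^(k.+1) * (1 - 'X) ^+ j.-1) *+ (m.+1 * 'C(m, k.+1)))%R : {poly R}).
  by rewrite binSl binSr !mulrnA; ring.
by rewrite !mulrnA; ring.
Qed.

Lemma deriv_bernstein_sum m c :
  (\sum_(k < m.+2) c k *: bernstein m.+1 k)^`() =
  m.+1%:R *: \sum_(k < m.+1) fdiff c k *: bernstein m k.
Proof.
have shift : \sum_(k < m.+1) c k.+1 *: bernstein m k.+1 =
             \sum_(k < m.+1) c k *: bernstein m k - c 0%N *: bernstein m 0.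
  rewrite big_ord_recr /= bernstein_small // scaler0 addr0.
  by rewrite [in RHS]big_ord_recl addrC addKr.
rewrite raddf_sum big_ord_recl /= derivZ deriv_bernstein0.
under eq_bigr => k _ do rewrite derivZ /bump add1n deriv_bernsteinS scalerA mulrC -scalerA scalerBr.
under [in RHS]eq_bigr => k _ do rewrite scalerBl.
rewrite -scaler_sumr !sumrB shift.
rewrite -!mul_polyC; ring.
Qed.
End Bernstein.

Lemma deriv2_bernstein_sum (R : comNzRingType) m (c : nat -> R) :
  (\sum_(k < m.+3) c k *: bernstein R m.+2 k)^`()^`() =
  (m.+2 * m.+1)%:R *: \sum_(k < m.+1) fdiff (fdiff c) k *: bernstein R m k.
Proof. by rewrite deriv_bernstein_sum derivZ deriv_bernstein_sum scalerA natrM. Qed.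

Lemma horner_bernstein (R : comNzRingType) m k (x : R) :
  (bernstein R m k).[x] = 'C(m, k)%:R * (x ^+ k * (1 - x) ^+ (m - k)).
Proof. by rewrite /bernstein !hornerE. Qed.

Lemma bernstein_ge0 (R : numDomainType) m k (x : R) :
  0 <= x <= 1 -> 0 <= (bernstein R m k).[x].
Proof.
case/andP=> x0 x1; rewrite horner_bernstein.
by rewrite !mulr_ge0 ?exprn_ge0 ?subr_ge0.
Qed.

Lemma derive1_horner (R : realType) (P : {poly R}) :
  'D_1 (horner P : R -> R^o) = horner P^`().
Proof. by apply/funext => x; rewrite -derive1E -derivE. Qed.

Lemma convex_on01_horner (R : realType) (P : {poly R}) :
  (forall x, 0 < x < 1 -> 0 <= P^`()^`().[x]) -> convex_on01 (horner P).
Proof.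
move=> P''_ge0 x y t x01 y01 /andP[t0 t1].
wlog xy : x y t x01 y01 t0 t1 / x <= y.
  move=> hwlog; have [|/ltW yx] := leP x y; first exact: hwlog.
  have := hwlog y x (1 - t) y01 x01; rewrite subKr subr_ge0 lerBlDr lerDl.
  by move=> /(_ t1 t0 yx); rewrite [t * x + _]addrC [t * P.[x] + _]addrC.
move: x01 y01 => /andP[x0 _] /andP[_ y1].
have := @second_derivative_convex R (horner P) x y _ _ _ _ _ (Itv01 t0 t1) xy.
rewrite !convRE /=; apply.
- move=> z /andP[xz zy]; rewrite derive1_horner -derive1E -derivE.
  by apply: P''_ge0; rewrite (le_lt_trans x0 xz) (lt_le_trans zy y1).
- exact/cvg_at_left_filter/continuous_horner.
- exact/cvg_at_right_filter/continuous_horner.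
- by move=> z _; exact: derivable_horner.
- by move=> z _; rewrite derive1_horner; exact: derivable_horner.
Qed.

Lemma convex_bernstein_sum (R : realType) n (c : nat -> R) : (2 <= n)%N ->
  (forall k, (k <= n - 2)%N -> 0 <= fdiff (fdiff c) k) ->
  convex_on01 (horner (\sum_(k < n.+1) c k *: bernstein R n k)).
Proof.
case: n => [|[|m]] // _ c''_ge0; apply: convex_on01_horner => x /andP[x0 x1].
rewrite deriv2_bernstein_sum hornerZ horner_sum mulr_ge0 // sumr_ge0 // => k _.
rewrite hornerZ mulr_ge0 //; last by rewrite bernstein_ge0 // !ltW.
by apply: c''_ge0; rewrite subn2 -ltnS.
Qed.

Lemma floor_mulr_divr_le (R : archiRealFieldType) (y C : R) : 0 < C ->
  (Num.floor (y * C))%:~R / C <= y.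
Proof. by move=> C0; rewrite ler_pdivrMr // floor_le. Qed.

Lemma floor_mulr_divr_gt (R : archiRealFieldType) (y C : R) : 0 < C ->
  y - C^-1 < (Num.floor (y * C))%:~R / C.
Proof.
move=> C0; rewrite ltr_pdivlMr // mulrBl mulVf ?gt_eqF // ltrBlDr.
by have := floorD1_gt (y * C); rewrite intrD.
Qed.

Definition floor_err {R : numFieldType} n k : R :=
  if (0 < k < n)%N then 'C(n, k)%:R^-1 else 0.

Section Btilde.
Variables (R : realType) (n : nat) (f : R -> R).

Definition btilde_coef k : R :=
  (Num.floor (f (k%:R / n%:R) * 'C(n, k)%:R))%:~R / 'C(n, k)%:R.


Lemma Btilde_bernstein :
  Btilde n f = horner (\sum_(k < n.+1) btilde_coef k *: bernstein R n k).
Proof.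
apply/funext => x; rewrite /Btilde horner_sum; apply: eq_bigr => k _.
rewrite hornerZ horner_bernstein /btilde_coef [RHS]mulrA divfK ?mulrA // gt_eqF //.
by rewrite binr_gt0 // -ltnS.
Qed.

Lemma btilde_coef_le k : (k <= n)%N -> btilde_coef k <= f (k%:R / n%:R).
Proof. by move=> kn; apply/floor_mulr_divr_le/binr_gt0. Qed.

Lemma btilde_coef_ge k : (0 < n)%N -> f 0 \is a Num.int -> f 1 \is a Num.int ->
  (k <= n)%N -> f (k%:R / n%:R) - floor_err n k <= btilde_coef k.
Proof.
move=> n0 f0 f1 kn; rewrite /floor_err /btilde_coef.
have [->|k0] := posnP k; first by rewrite /= mul0r bin0 !divr1 mulr1 floorK ?subr0.
have [->|kn'] := eqVneq k n.
  by rewrite ltnn andbF divff ?pnatr_eq0 -?lt0n // binn !mulr1 divr1 floorK ?subr0.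
rewrite ltn_neqAle kn' kn /=.
exact/ltW/floor_mulr_divr_gt/binr_gt0.
Qed.

End Btilde.

Lemma convex_on01_delta2_ge0 (R : realType) (g : R -> R) n k :
  convex_on01 g -> (k.+2 <= n)%N ->
  0 <= g (k.+2%:R / n%:R) - 2 * g (k.+1%:R / n%:R) + g (k%:R / n%:R).
Proof.
move=> g_convex kn; have n0 : (0 < n)%N by lia.
have grid j : (j <= n)%N -> 0 <= (j%:R / n%:R : R) <= 1.
  by move=> jn; rewrite divr_ge0 //= ler_pdivrMr ?mul1r ?ler_nat // ltr0n.
have mid : 2^-1 * (k%:R / n%:R) + (1 - 2^-1) * (k.+2%:R / n%:R) = k.+1%:R / n%:R :> R.
  by rewrite -[k.+2]addn2 -[k.+1]addn1 !natrD; field; rewrite pnatr_eq0 -lt0n.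
have := g_convex _ _ 2^-1 (grid k (ltnW (ltnW kn))) (grid k.+2 kn).
by rewrite mid invr_ge0 invf_le1 ?ler0n ?ler1n //= => /(_ isT); lra.
Qed.

Lemma floor_err_le_delta2 (R : realType) (Phi : R -> R) n :
  (2 <= n)%N ->
  Phi (2%:R / n%:R) - 2 * Phi (1 / n%:R) + Phi 0 >= ('C(n, 2))%:R^-1 ->
  (forall k : nat, (1 <= k)%N -> (k <= n - 3)%N ->
     Phi (k.+2%:R / n%:R) - 2 * Phi (k.+1%:R / n%:R) + Phi (k%:R / n%:R)
       >= ('C(n, k))%:R^-1 + ('C(n, k.+2))%:R^-1) ->
  Phi 1 - 2 * Phi ((n - 1)%:R / n%:R) + Phi ((n - 2)%:R / n%:R)
    >= ('C(n, n - 2))%:R^-1 ->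
  forall k, (k <= n - 2)%N ->
  floor_err n k + floor_err n k.+2 <=
    Phi (k.+2%:R / n%:R) - 2 * Phi (k.+1%:R / n%:R) + Phi (k%:R / n%:R).
Proof.
case: n => [|[|m]] // _ Phi_first Phi_mid Phi_last k; rewrite !subSS subn0 /floor_err.
have binV_ge0 j : 0 <= 'C(m.+2, j)%:R^-1 :> R by rewrite invr_ge0 ler0n.
have [-> _|k0] := posnP k.
  by rewrite /= mul0r; case: ifP => _; move: Phi_first (binV_ge0 2%N); lra.
rewrite leq_eqVlt => /predU1P[->|km].
  rewrite ltnn andbF addr0 ltnS leqnSn /= divff ?pnatr_eq0 //.
  by move: Phi_last; rewrite !subSS !subn0.
have [k_lt k2_lt] : (k < m.+2)%N /\ (k.+2 < m.+2)%N by lia.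
rewrite k_lt k2_lt /=; apply: Phi_mid => //; lia.
Qed.

Theorem proposition3p1 (R : realType) (f Phi : R -> R) (n : nat) :
  f 0 \is a Num.int -> f 1 \is a Num.int ->
  (2 <= n)%N ->
  Phi (2%:R / n%:R) - 2 * Phi (1 / n%:R) + Phi 0 >= ('C(n, 2))%:R^-1 ->
  (forall k : nat, (1 <= k)%N -> (k <= n - 3)%N ->
     Phi (k.+2%:R / n%:R) - 2 * Phi (k.+1%:R / n%:R) + Phi (k%:R / n%:R)
       >= ('C(n, k))%:R^-1 + ('C(n, k.+2))%:R^-1) ->
  Phi 1 - 2 * Phi ((n - 1)%:R / n%:R) + Phi ((n - 2)%:R / n%:R)
    >= ('C(n, n - 2))%:R^-1 ->
  convex_on01 (fun x => f x - Phi x) ->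
  convex_on01 (Btilde n f).
Proof.
move=> f0 f1 n2 Phi_first Phi_mid Phi_last f_Phi_convex.
rewrite Btilde_bernstein; apply: convex_bernstein_sum => // k kn.
have k2n : (k.+2 <= n)%N by lia.
have n0 : (0 < n)%N by lia.
have err_le := floor_err_le_delta2 n2 Phi_first Phi_mid Phi_last kn.
have f_Phi_delta2 := convex_on01_delta2_ge0 f_Phi_convex k2n.
have coef_k := btilde_coef_ge n0 f0 f1 (ltnW (ltnW k2n)).
have coef_k2 := btilde_coef_ge n0 f0 f1 k2n.
have coef_k1 := btilde_coef_le f (ltnW k2n).
rewrite /fdiff; lra.
Qed.
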